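(* Let $n$ be even. Up to scaling there is a unique non-zero $\mathrm{GL}_n(\mathbb{R})$-equivariant map $(\mathbb{P}(\mathbb{R}^n))^{q}\to\mathbb{R}_\varepsilon$ for $q=n+1$, and there is no non-zero such map for $q\le n$.
   Context: $\mathbb{P}(\mathbb{R}^n)$ is real projective space with the diagonal $\mathrm{GL}_n(\mathbb{R})$-action on tuples. $\mathbb{R}_\varepsilon$ denotes $\mathbb{R}$ with $g\in\mathrm{GL}_n(\mathbb{R})$ acting by multiplication by $\varepsilon(g)=\operatorname{sign}\det g$. A map $f$ is equivariant if $f(gx_0,\dots,gx_{q-1})=\varepsilon(g)f(x_0,\dots,x_{q-1})$ for all $g$ and all tuples (arbitrary functions, no measurability required). *)

From HB Require Import structures.
From mathcomp Require Export all_boot all_order all_algebra.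
Set Implicit Arguments. Unset Strict Implicit. Unset Printing Implicit Defensive.
Import Order.TTheory GRing.Theory Num.Theory.
Local Open Scope ring_scope.

Section Projective.
Variables (R : rcfType) (n : nat).

(* The picked index only depends on the support of v, hence
   pnormalize (c *: v) = pnormalize v for c != 0. *)
Definition pnormalize (v : 'cV[R]_n) : 'cV[R]_n :=
  match [pick i : 'I_n | v i ord0 != 0] with
  | Some i => (v i ord0)^-1 *: v
  | None => v
  end.

Definition pnormal (v : 'cV[R]_n) : bool := (v != 0) && (pnormalize v == v).

(* Real projective space P(R^n): non-zero vectors modulo scaling, each class
   represented by its unique normalized representative. *)
Definition proj := {v : 'cV[R]_n | pnormal v}.

(* Action of g in GL_n on P(R^n): [v] |-> [g v].  (The default p in insubd
   is never used when g is invertible.) *)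
Definition pact (g : 'M[R]_n) (p : proj) : proj :=
  insubd p (pnormalize (g *m val p)).

Definition epsilon (g : 'M[R]_n) : R := Num.sg (\det g).

Definition equivariant (q : nat) (f : ('I_q -> proj) -> R) : Prop :=
  forall g : 'M[R]_n, g \in unitmx ->
  forall x : 'I_q -> proj, f (fun i => pact g (x i)) = epsilon g * f x.

End Projective.

From HB Require Import structures.
From mathcomp Require Import all_boot all_order all_algebra.
From Stdlib Require Import FunctionalExtensionality.
Import Order.TTheory GRing.Theory Num.Theory.
Local Open Scope ring_scope.

(* If some g with det g < 0 fixes every point of a configuration x, then an
   equivariant f satisfies f x = - f x, so f x = 0.  A reflection does this as
   soon as all points of x but one lie in a hyperplane, which is always the
   case for q <= n points.  For q = n + 1 the remaining configurations are
   exactly the images of the standard frame e_1, ..., e_n, e_1 + ... + e_n, so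
   an equivariant map is determined by its value there.  Finally the sign of
   the product of the n + 1 maximal minors is equivariant: rescaling the
   representatives multiplies that product by P^n for a non-zero P, which is
   positive since n is even. *)

Section ProjectiveSpace.
Context {R : rcfType} {n : nat}.
Local Notation proj := (proj R n).

Definition pnormalize_coef (v : 'cV[R]_n) : R :=
  match [pick i : 'I_n | v i ord0 != 0] with
  | Some i => (v i ord0)^-1
  | None => 1
  end.

Lemma pnormalizeE (v : 'cV[R]_n) : pnormalize v = pnormalize_coef v *: v.
Proof. by rewrite /pnormalize /pnormalize_coef; case: pickP => // _; rewrite scale1r. Qed.

Lemma pnormalize_coef_neq0 (v : 'cV[R]_n) : pnormalize_coef v != 0.
Proof. by rewrite /pnormalize_coef; case: pickP => [i vi0|_]; rewrite ?invr_eq0 ?oner_eq0. Qed.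

Lemma pnormalizeZ (v : 'cV[R]_n) c : c != 0 -> pnormalize (c *: v) = pnormalize v.
Proof.
move=> c0; rewrite /pnormalize.
have -> : [pick i | (c *: v) i ord0 != 0] = [pick i | v i ord0 != 0].
  by apply: eq_pick => i /=; rewrite mxE mulf_eq0 negb_or c0.
case: pickP => [i _|v0]; first by rewrite mxE scalerA invfM mulrAC mulVf // mul1r.
suff -> : v = 0 by rewrite scaler0.
by apply/matrixP => i j; rewrite (ord1 j) mxE; apply/eqP/negbFE/v0.
Qed.

Lemma pnormal_pnormalize (v : 'cV[R]_n) : v != 0 -> pnormal (pnormalize v).
Proof.
move=> v0; rewrite /pnormal pnormalizeE scaler_eq0 negb_or pnormalize_coef_neq0 v0 /=.
by rewrite pnormalizeZ ?pnormalize_coef_neq0 // pnormalizeE.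
Qed.

Lemma pnormalize_id (v : 'cV[R]_n) :
  (forall i, v i 0 != 0 -> v i 0 = 1) -> pnormalize v = v.
Proof.
by move=> v01; rewrite /pnormalize; case: pickP => // i vi0; rewrite v01 // invr1 scale1r.
Qed.

Lemma pnormalize_val (p : proj) : pnormalize (val p) = val p.
Proof. by case/andP: (valP p) => _ /eqP. Qed.

Lemma proj_neq0 (p : proj) : val p != 0.
Proof. by case/andP: (valP p). Qed.

Lemma val_pact (g : 'M[R]_n) (p : proj) :
  g \in unitmx -> val (pact g p) = pnormalize (g *m val p).
Proof.
move=> gu; rewrite /pact val_insubd pnormal_pnormalize //.
by apply: contra (proj_neq0 p) => /eqP gp0; rewrite -(mulKmx gu (val p)) gp0 mulmx0.
Qed.

Lemma pact_eq (g : 'M[R]_n) (p p' : proj) c : g \in unitmx -> c != 0 ->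
  g *m val p = c *: val p' -> pact g p = p'.
Proof.
by move=> gu c0 gp; apply: val_inj; rewrite val_pact // gp pnormalizeZ // pnormalize_val.
Qed.

End ProjectiveSpace.

Lemma mx11_eq0 (R : pzRingType) (M : 'M[R]_1) : M 0 0 = 0 -> M = 0.
Proof. by move=> M00; rewrite [M]mx11_scalar M00; apply/matrixP => i j; rewrite !mxE mul0rn. Qed.

(* The block identity [1 0; w 1] [1 + uw u; 0 1] [1 0; -w 1] = [1 u; 0 1 + wu]. *)
Lemma det1D_mulmx (R : comPzRingType) n (u : 'cV[R]_n) (w : 'rV[R]_n) :
  \det (1%:M + u *m w) = 1 + (w *m u) 0 0.
Proof.
pose L := block_mx (1%:M : 'M[R]_n) 0 w (1%:M : 'M[R]_1).
pose U := block_mx (1%:M + u *m w) u 0 (1%:M : 'M[R]_1).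
pose L' := block_mx (1%:M : 'M[R]_n) 0 (- w) (1%:M : 'M[R]_1).
have LUL' : L *m U *m L' = block_mx 1%:M u 0 (1%:M + w *m u).
  rewrite /L /U /L' !mulmx_block !mul1mx !mul0mx !mulmx0 !mulmx1 !addr0 !add0r.
  congr block_mx; first by rewrite mulmxN addrK.
    by rewrite mulmxDr mulmx1 mulmxN mulmxDl mul1mx mulmxA [X in _ - X]addrC subrr.
  by rewrite addrC.
have := congr1 determinant LUL'.
rewrite !det_mulmx /L /U /L' !det_lblock !det_ublock !det1 !mul1r !mulr1 => ->.
by rewrite det_mx11 !mxE.
Qed.

Lemma prod_prod_lift (R : comPzRingType) m (c : 'I_m.+1 -> R) :
  \prod_(i < m.+1) \prod_(j < m) c (lift i j) = (\prod_k c k) ^+ m.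
Proof.
have prod_lift (i : 'I_m.+1) : \prod_(j < m) c (lift i j) = \prod_(k | k != i) c k.
  rewrite (reindex_omap (lift i) (unlift i)) /=; last first.
    by move=> k; case: unliftP => [j ->|->]; rewrite ?eqxx.
  by apply: eq_bigl => j; rewrite liftK eqxx eq_sym neq_lift.
rewrite (eq_bigr _ (fun i _ => prod_lift i)) (exchange_big_dep predT) //= -prodrXl.
apply: eq_bigr => k _; rewrite prodr_const; congr (_ ^+ _).
by rewrite (eq_card (B := predC1 k)) ?cardC1 ?card_ord // => i; rewrite !inE eq_sym.
Qed.

Section ColumnMatrix.
Context {R : fieldType} {n : nat}.

Definition colmx {m} (v : 'I_m -> 'cV[R]_n) : 'M[R]_(n, m) := \matrix_(r, j) v j r 0.

Lemma colmx_mul_entry {m} (v : 'I_m -> 'cV[R]_n) (w : 'rV[R]_n) j :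
  (w *m colmx v) 0 j = (w *m v j) 0 0.
Proof. by rewrite !mxE; apply: eq_bigr => r _; rewrite mxE. Qed.

Lemma exists_annihilator {m} (v : 'I_m -> 'cV[R]_n) : (\rank (colmx v) < n)%N ->
  exists2 w : 'rV[R]_n, w != 0 & forall j, w *m v j = 0.
Proof.
move=> rank_lt; have : kermx (colmx v) != 0.
  by rewrite -mxrank_eq0 mxrank_ker subn_eq0 -ltnNge.
case/rowV0Pn => w /sub_kermxP wv w0; exists w => // j.
by apply: mx11_eq0; rewrite -colmx_mul_entry wv mxE.
Qed.

Lemma exists_annihilator_lt {m} (v : 'I_m -> 'cV[R]_n) : (m < n)%N ->
  exists2 w : 'rV[R]_n, w != 0 & forall j, w *m v j = 0.
Proof. by move=> lt_mn; apply/exists_annihilator/(leq_ltn_trans (rank_leq_col _)). Qed.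

Lemma exists_annihilator_det0 (v : 'I_n -> 'cV[R]_n) : \det (colmx v) = 0 ->
  exists2 w : 'rV[R]_n, w != 0 & forall j, w *m v j = 0.
Proof.
move=> det0; apply: exists_annihilator; rewrite ltn_neqAle rank_leq_row andbT.
by rewrite -[_ == _]/(row_free _) row_free_unit unitmxE unitfE det0 eqxx.
Qed.

Definition reflection (u : 'cV[R]_n) (w : 'rV[R]_n) : 'M[R]_n :=
  1%:M + (- 2%:R *: u) *m w.

Lemma det_reflection u w : w *m u = 1%:M -> \det (reflection u w) = -1.
Proof.
move=> wu; rewrite det1D_mulmx -scalemxAr wu !mxE /= mulr1.
by rewrite mulr2n opprD addrA subrr add0r.
Qed.

Lemma reflectionE u w (v : 'cV[R]_n) : reflection u w *m v = v - 2%:R *: (u *m (w *m v)).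
Proof. by rewrite mulmxDl mul1mx -mulmxA -scalemxAl scaleNr. Qed.

End ColumnMatrix.

Section EquivariantVanishing.
Context {R : rcfType} {n q : nat} {f : ('I_q -> proj R n) -> R}.
Hypothesis f_equiv : equivariant f.

Definition degenerate (x : 'I_q -> proj R n) :=
  exists k0, exists2 w : 'rV[R]_n, w != 0 &
    forall k, k != k0 -> w *m val (x k) = 0.

Lemma equivariant_eq0_reflection x u (w : 'rV[R]_n) : w *m u = 1%:M ->
  (forall j, w *m val (x j) = 0 \/ u *m (w *m val (x j)) = val (x j)) -> f x = 0.
Proof.
move=> wu xj_fixed; set g := reflection u w.
have det_g : \det g = -1 by apply: det_reflection.
have gu : g \in unitmx by rewrite unitmxE det_g unitrN unitr1.
have gx : (fun j => pact g (x j)) = x.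
  apply: functional_extensionality => j.
  case: (xj_fixed j) => xj.
  - apply: (@pact_eq _ _ _ _ _ 1) => //; first exact: oner_neq0.
    by rewrite reflectionE xj mulmx0 scaler0 subr0 scale1r.
  - apply: (@pact_eq _ _ _ _ _ (-1)) => //; first by rewrite oppr_eq0 oner_neq0.
    rewrite reflectionE xj scaleN1r -{1}(scale1r (val _)) -scalerBl.
    by rewrite mulr2n opprD addrA subrr sub0r scaleN1r.
have := f_equiv g gu x; rewrite gx /epsilon det_g sgrN sgr1 mulN1r => /eqP.
by rewrite -subr_eq0 opprK -mulr2n mulrn_eq0 /= => /eqP.
Qed.

Lemma equivariant_eq0_hyperplane x (w : 'rV[R]_n) :
  w != 0 -> (forall j, w *m val (x j) = 0) -> f x = 0.
Proof.
move=> w0 wx; have [r wr0] : exists r, w 0 r != 0.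
  apply/existsP; apply: contraNT w0; rewrite negb_exists => /forallP w_eq0.
  by apply/eqP/matrixP => i j; rewrite (ord1 i) mxE; apply/eqP/negbNE/w_eq0.
apply: (@equivariant_eq0_reflection x ((w 0 r)^-1 *: delta_mx r 0) w); last by left.
rewrite -scalemxAr -colE; apply/matrixP => i j.
by rewrite (ord1 i) (ord1 j) !mxE mulVf.
Qed.

(* The reflection in the hyperplane along x k0 fixes the other points and negates x k0. *)
Lemma equivariant_eq0_degenerate x : degenerate x -> f x = 0.
Proof.
move=> [k0 [w w0 wx]]; have [wk0|wk0] := eqVneq (w *m val (x k0)) 0.
  by apply: (equivariant_eq0_hyperplane x w w0) => j; case: (eqVneq j k0) => [->|/wx].
set a := (w *m val (x k0)) 0 0.
have a0 : a != 0 by apply: contra wk0 => /eqP/mx11_eq0 ->.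
have wxk0 : w *m val (x k0) = a%:M by rewrite [LHS]mx11_scalar.
apply: (@equivariant_eq0_reflection x (a^-1 *: val (x k0)) w).
  by rewrite -scalemxAr wxk0 scale_scalar_mx mulVf.
move=> j; have [->|/wx] := eqVneq j k0; last by left.
by right; rewrite wxk0 mul_mx_scalar scalerA mulfV // scale1r.
Qed.

End EquivariantVanishing.

Lemma equivariant_eq0_small (R : rcfType) (n q : nat) (f : ('I_q -> proj R n) -> R) :
  equivariant f -> (0 < n)%N -> (q <= n)%N -> forall x, f x = 0.
Proof.
case: q f => [|q] f f_equiv n_gt0 le_qn x.
  have [w w0 _] := exists_annihilator_lt (fun j : 'I_0 => 0 : 'cV[R]_n) n_gt0.
  by apply: (equivariant_eq0_hyperplane f_equiv x w w0); case.
apply: (equivariant_eq0_degenerate f_equiv); exists ord0.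
have [w w0 wx] := exists_annihilator_lt (fun j => val (x (lift ord0 j))) le_qn.
by exists w => // k; case: (unliftP ord0 k) => [j ->|->]; rewrite ?eqxx.
Qed.

Section StandardFrame.
Context {R : rcfType} {n : nat}.
Local Notation proj := (proj R n).

Lemma colmx_pact m (g : 'M[R]_n) (v : 'I_m -> proj) : g \in unitmx ->
  colmx (fun j => val (pact g (v j))) =
  g *m colmx (fun j => val (v j)) *m diag_mx (\row_j pnormalize_coef (g *m val (v j))).
Proof.
move=> gu; apply/matrixP => r j; rewrite mul_mx_diag !mxE val_pact // pnormalizeE mxE mulrC.
by congr (_ * _); rewrite !mxE; apply: eq_bigr => k _; rewrite mxE.
Qed.

Definition colmx_omit (x : 'I_n.+1 -> proj) (i : 'I_n.+1) : 'M[R]_n :=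
  colmx (fun j => val (x (lift i j))).

Definition sgdet (x : 'I_n.+1 -> proj) : R := Num.sg (\prod_i \det (colmx_omit x i)).

Lemma sgdet_equivariant : ~~ odd n -> equivariant sgdet.
Proof.
move=> n_even g gu x; set c := fun k => pnormalize_coef (g *m val (x k)).
have det_omit i : \det (colmx_omit (fun k => pact g (x k)) i)
    = \det g * \det (colmx_omit x i) * \prod_j c (lift i j).
  rewrite /colmx_omit colmx_pact // !det_mulmx det_diag.
  by congr (_ * _); apply: eq_bigr => j _; rewrite mxE.
have c_neq0 : \prod_k c k != 0 by apply/prodf_neq0 => k _; apply: pnormalize_coef_neq0.
have det_g : \det g != 0 by rewrite -unitfE -unitmxE.
have sg_even (y : R) : y != 0 -> Num.sg (y ^+ n) = 1.
  by move=> y0; rewrite gtr0_sg // exprn_even_gt0 // y0 orbT.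
rewrite /sgdet (eq_bigr _ (fun i _ => det_omit i)) !big_split /= prodr_const card_ord.
by rewrite prod_prod_lift !sgrM exprSr sgrM !sg_even // mul1r mulr1.
Qed.

Hypothesis n_gt0 : (0 < n)%N.

Definition std_frame_vec (k : 'I_n.+1) : 'cV[R]_n :=
  if unlift ord_max k is Some j then delta_mx j 0 else const_mx 1.

Lemma std_frame_vec_pnormal k : pnormal (std_frame_vec k).
Proof.
rewrite /pnormal /std_frame_vec; case: (unlift ord_max k) => [j|]; apply/andP; split.
- by apply/eqP => /matrixP/(_ j 0); rewrite !mxE !eqxx; apply/eqP/oner_neq0.
- by apply/eqP/pnormalize_id => i; rewrite mxE; case: (_ && _); rewrite ?eqxx.
- by apply/eqP => /matrixP/(_ (Ordinal n_gt0) 0); rewrite !mxE; apply/eqP/oner_neq0.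
- by apply/eqP/pnormalize_id => i; rewrite mxE.
Qed.

Definition std_frame (k : 'I_n.+1) : proj :=
  exist _ (std_frame_vec k) (std_frame_vec_pnormal k).

Lemma std_frame_annihilator (w : 'rV[R]_n) i :
  (forall k, k != i -> w *m std_frame_vec k = 0) -> w = 0.
Proof.
move=> wv; have w_delta r : lift ord_max r != i -> w 0 r = 0.
  move=> /wv; rewrite /std_frame_vec liftK -colE => /matrixP/(_ 0 0).
  by rewrite !mxE.
apply/matrixP => z r; rewrite (ord1 z) mxE.
case: (unliftP ord_max i) => [i' Ei|Ei]; last first.
  by apply: w_delta; rewrite Ei eq_sym neq_lift.
have [->|ri] := eqVneq r i'; last by apply: w_delta; rewrite Ei (inj_eq lift_inj).
have : w *m std_frame_vec ord_max = 0 by apply: wv; rewrite Ei neq_lift.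
rewrite /std_frame_vec unlift_none => /matrixP/(_ 0 0).
rewrite !mxE (bigD1 i') //= mxE mulr1 big1 ?addr0 // => r' r'i'.
by rewrite mxE mulr1; apply: w_delta; rewrite Ei (inj_eq lift_inj).
Qed.

Lemma sgdet_std_frame_neq0 : sgdet std_frame != 0.
Proof.
rewrite sgr_eq0; apply/prodf_neq0 => i _; apply/eqP => /exists_annihilator_det0 [w w0 wv].
case/eqP: w0; apply: (std_frame_annihilator _ i) => k ki.
by case: (unliftP i k) ki => [j ->|->]; [rewrite wv | rewrite eqxx].
Qed.

(* If x 0, ..., x (n - 1) form a basis (the columns of A) in which x n has
   coordinates a without zero entry, g = A diag(a) maps the standard frame
   onto x.  Otherwise some non-zero row vector, from the kernel of A or a row
   of A^-1, kills all points of x but one. *)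
Lemma std_frame_or_degenerate (x : 'I_n.+1 -> proj) :
  (exists2 g, g \in unitmx & x = fun k => pact g (std_frame k)) \/ degenerate x.
Proof.
set A := colmx_omit x ord_max.
have [/exists_annihilator_det0 [w w0 wx]|detA] := eqVneq (\det A) 0.
  right; exists ord_max, w => // k.
  by case: (unliftP ord_max k) => [j ->|->]; rewrite ?eqxx.
have Au : A \in unitmx by rewrite unitmxE unitfE.
set a := invmx A *m val (x ord_max).
have [j /eqP aj0|a_neq0] := pickP (fun j => a j 0 == 0).
  have wA : row j (invmx A) *m A = delta_mx 0 j by rewrite -row_mul mulVmx // rowE mulmx1.
  right; exists (lift ord_max j), (row j (invmx A)).
    apply/eqP => w0; move: wA; rewrite w0 mul0mx => /matrixP/(_ 0 j)/eqP.
    by rewrite !mxE !eqxx eq_sym oner_eq0.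
  move=> k; have [j' ->|-> _] := unliftP ord_max k.
    rewrite (inj_eq lift_inj) => j'j; apply: mx11_eq0.
    rewrite -(colmx_mul_entry (fun j => val (x (lift ord_max j)))) wA mxE.
    by rewrite (negbTE j'j) andbF.
  by apply: mx11_eq0; rewrite -row_mul mxE.
have gu : A *m diag_mx a^T \in unitmx.
  rewrite unitmxE unitfE det_mulmx det_diag mulf_neq0 //.
  by apply/prodf_neq0 => j _; rewrite mxE; apply/negbT/(a_neq0 j).
left; exists (A *m diag_mx a^T) => //.
apply: functional_extensionality => k; apply/esym.
have [j ->|->] := unliftP ord_max k.
  apply: (@pact_eq _ _ _ _ _ (a j 0)) => //; first exact: negbT (a_neq0 j).
  have diag_delta : diag_mx a^T *m (delta_mx j 0 : 'cV[R]_n) = a j 0 *: delta_mx j 0.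
    apply/matrixP => r z; rewrite mul_diag_mx !mxE.
    by have [->|] := eqVneq r j; rewrite ?mulr1 ?mulr0 //= => _; rewrite mulr0.
  rewrite /= /std_frame_vec liftK -mulmxA diag_delta -scalemxAr -colE.
  by congr (_ *: _); apply/matrixP => r z; rewrite (ord1 z) !mxE.
apply: (@pact_eq _ _ _ _ _ 1) => //; first exact: oner_neq0.
have diag_ones : diag_mx a^T *m const_mx 1 = a.
  by apply/matrixP => r z; rewrite (ord1 z) mul_diag_mx !mxE mulr1.
by rewrite /= /std_frame_vec unlift_none -mulmxA diag_ones scale1r mulKVmx.
Qed.

Lemma equivariant_sgdet_multiple (h : ('I_n.+1 -> proj) -> R) :
  ~~ odd n -> equivariant h ->
  forall x, h x = h std_frame / sgdet std_frame * sgdet x.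
Proof.
move=> n_even h_equiv x; have sgdet_equiv := sgdet_equivariant n_even.
have [[g gu ->]|x_deg] := std_frame_or_degenerate x.
  by rewrite (h_equiv g gu) (sgdet_equiv g gu) mulrCA divfK ?sgdet_std_frame_neq0.
by rewrite (equivariant_eq0_degenerate h_equiv _ x_deg)
  (equivariant_eq0_degenerate sgdet_equiv _ x_deg) mulr0.
Qed.

End StandardFrame.

Theorem proposition3p1 (R : rcfType) (n : nat) (hn_even : ~~ odd n) (hn_pos : (0 < n)%N) :
  (exists f : ('I_n.+1 -> proj R n) -> R,
      equivariant f /\ (exists x, f x != 0) /\
      (forall h : ('I_n.+1 -> proj R n) -> R,
          equivariant h -> exists c : R, forall x, h x = c * f x))
  /\
  (forall q : nat, (q <= n)%N ->
     forall f : ('I_q -> proj R n) -> R, equivariant f -> forall x, f x = 0).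
Proof.
split; last by move=> q le_qn f f_equiv; apply: equivariant_eq0_small f_equiv hn_pos le_qn.
exists sgdet; split; first exact: sgdet_equivariant.
split; first by exists (std_frame hn_pos); apply: sgdet_std_frame_neq0.
move=> h h_equiv; exists (h (std_frame hn_pos) / sgdet (std_frame hn_pos)).
exact: equivariant_sgdet_multiple.
Qed.
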